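(* Let $C\in\mathcal L(\mathcal X,\mathcal Y)$ and $\mathbf A=(A_1,\dots,A_d)\in\mathcal L(\mathcal X)^d$. Suppose the output-stable pair $(C,\mathbf A)$ is observable and $\mathbf A$ is $C$-abelian. Then $\mathbf A$ is commutative: $A_iA_j=A_jA_i$ for all $i,j=1,\dots,d$.
   Context: $\mathcal F_d$: free semigroup of words on $\{1,\dots,d\}$; $\mathbf A^v=A_{i_N}\cdots A_{i_1}$ for $v=i_N\cdots i_1$. Output-stable: $x\mapsto\{C\mathbf A^vx\}_{v\in\mathcal F_d}$ is bounded from $\mathcal X$ into $\ell^2_{\mathcal Y}(\mathcal F_d)$. Observable: $C\mathbf A^vx=0$ for all $v$ implies $x=0$. The abelianization $\mathbf a\colon\mathcal F_d\to\mathbb Z^d_+$ sends a word to the vector counting occurrences of each letter; $\mathbf A$ is $C$-abelian if $C\mathbf A^v=C\mathbf A^u$ whenever $\mathbf a(v)=\mathbf a(u)$. *)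

From HB Require Import structures.
From mathcomp Require Import all_boot all_order all_algebra.
From mathcomp Require Import complex.
From mathcomp Require Import all_classical all_reals all_analysis.

Set Implicit Arguments.
Unset Strict Implicit.
Unset Printing Implicit Defensive.

Import Order.TTheory GRing.Theory Num.Theory.
Import numFieldNormedType.Exports.
Local Open Scope ring_scope.

(* Words of the free semigroup F_d on the letters {1..d}, encoded as
   sequences of letters in 'I_d.  The word v = i_N ... i_1 is the sequence
   [:: i_N; ...; i_1].  (The empty word is allowed: it is the unit of the
   free monoid and A^{empty} = identity.) *)
Definition word (d : nat) := seq 'I_d.

Definition opow {K : numDomainType} {X : lmodType K} (d : nat)
  (A : 'I_d -> {linear X -> X}) (v : word d) (x : X) : X :=
  foldr (fun i y => A i y) x v.

Definition abel (d : nat) (v : word d) : {ffun 'I_d -> nat} :=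
  [ffun i => count_mem i v].

(* Hilbert space norm: the norm satisfies the parallelogram law
   (Jordan--von Neumann: exactly the norms coming from an inner product). *)
Definition parallelogram_law {K : numFieldType} (V : normedModType K) : Prop :=
  forall x y : V, `|x + y| ^+ 2 + `|x - y| ^+ 2 = 2%:R * (`|x| ^+ 2 + `|y| ^+ 2).

(* Output stability: x |-> (C A^v x)_{v in F_d} is a bounded map X -> l^2_Y(F_d),
   i.e. for some M, sum over every finite set of words of |C A^v x|^2
   is at most M^2 |x|^2. *)
Definition output_stable {K : numFieldType} (X Y : normedModType K) (d : nat)
  (C : {linear X -> Y}) (A : 'I_d -> {linear X -> X}) : Prop :=
  exists M : K, forall (x : X) (s : seq (word d)), uniq s ->
    \sum_(v <- s) `|C (opow A v x)| ^+ 2 <= M ^+ 2 * `|x| ^+ 2.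

Definition observable {K : numFieldType} (X Y : normedModType K) (d : nat)
  (C : {linear X -> Y}) (A : 'I_d -> {linear X -> X}) : Prop :=
  forall x : X, (forall v : word d, C (opow A v x) = 0) -> x = 0.

Definition C_abelian {K : numFieldType} (X Y : normedModType K) (d : nat)
  (C : {linear X -> Y}) (A : 'I_d -> {linear X -> X}) : Prop :=
  forall u v : word d, abel v = abel u -> forall x : X, C (opow A v x) = C (opow A u x).

From HB Require Import structures.
From mathcomp Require Import all_boot all_order all_algebra.
From mathcomp Require Import complex.
From mathcomp Require Import all_classical all_reals all_analysis.
Import Order.TTheory GRing.Theory Num.Theory.
Import numFieldNormedType.Exports.
Local Open Scope ring_scope.
Local Open Scope complex_scope.

(* For every word v, C A^v (A_i A_j - A_j A_i) x = C A^(v i j) x - C A^(v j i) x,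
   which vanishes because v i j and v j i have the same abelianization;
   observability then kills A_i A_j x - A_j A_i x. *)

Lemma abel_perm {d : nat} (u w : word d) : perm_eq u w -> abel u = abel w.
Proof. by move=> /permP count_uw; apply/ffunP => k; rewrite !ffunE count_uw. Qed.

Section WordPowers.

Variables (K : numDomainType) (X : lmodType K) (d : nat).
Variable A : 'I_d -> {linear X -> X}.

Lemma opow_cat (u w : word d) (x : X) :
  opow A (u ++ w) x = opow A u (opow A w x).
Proof. exact: foldr_cat. Qed.

Lemma opowB (w : word d) (x y : X) :
  opow A w (x - y) = opow A w x - opow A w y.
Proof. by elim: w => //= k w IHw; rewrite IHw linearB. Qed.

End WordPowers.

Lemma C_abelian_swap {K : numFieldType} {X Y : normedModType K} {d : nat}
    {C : {linear X -> Y}} {A : 'I_d -> {linear X -> X}} :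
  C_abelian C A ->
  forall (v : word d) (i j : 'I_d) (x : X),
    C (opow A v (A i (A j x))) = C (opow A v (A j (A i x))).
Proof.
move=> CabA v i j x.
have opow_pair k l : opow A v (A k (A l x)) = opow A (v ++ [:: k; l]) x.
  by rewrite opow_cat.
rewrite !opow_pair; apply: CabA; apply: abel_perm.
by rewrite perm_cat2l; apply/permP => p /=; rewrite addnCA.
Qed.

Theorem proposition3p6 (R : realType)
  (X Y : completeNormedModType R[i])
  (HX : parallelogram_law X) (HY : parallelogram_law Y)
  (d : nat) (C : {linear X -> Y}) (A : 'I_d -> {linear X -> X})
  (HCc : continuous C) (HAc : forall i, continuous (A i))
  (Hstab : output_stable C A) (Hobs : observable C A) (Hab : C_abelian C A) :
  forall i j : 'I_d, forall x : X, A i (A j x) = A j (A i x).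
Proof.
move=> i j x; apply/subr0_eq/Hobs => v.
by rewrite opowB linearB (C_abelian_swap Hab) subrr.
Qed.
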